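(* Let $m\geq 2$ and $G=T^+_{m,2}$ with root $r$ and stem $r'$. If $S$ is a Type II set for $G$, then $N_G[r]\setminus\mathcal{P}^\infty(S)=\{r',r\}$.
   Context: Power domination: for a graph $G=(V,E)$ and $S\subseteq V$, $\mathcal{P}^0(S)=N[S]$ and for $k\ge1$, $\mathcal{P}^k(S)=\mathcal{P}^{k-1}(S)\cup N^*(\mathcal{P}^{k-1}(S))$, where $x\in N^*(A)$ iff some $a\in A$ has $x$ as its only neighbor not in $A$; $\mathcal{P}^\infty(S)$ is the stable value (the set of observed vertices), and $S$ is a power dominating set if $\mathcal{P}^\infty(S)=V$. $T_{m,h}$ is the complete $m$-ary tree of height $h$ rooted at $r$; $T^+_{m,h}$ is $T_{m,h}$ plus a new vertex $r'$ (stem) joined to $r$. For $G=T^+_{m,h}$, a set $S\subseteq V(G)\setminus\{r'\}$ is Type I if it is a power dominating set for $G$; Type II if it is not but $S\cup\{r'\}$ is; Type 0 otherwise. *)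

From mathcomp Require Import all_boot.
Set Implicit Arguments. Unset Strict Implicit. Unset Printing Implicit Defensive.

Section PowerDomination.
Variables (T : finType) (e : rel T).

Definition cnbhd (S : {set T}) : {set T} :=
  [set x | (x \in S) || [exists y in S, e y x]].

Definition nstar (A : {set T}) : {set T} :=
  [set x | [exists a in A, [set y | e a y && (y \notin A)] == [set x]]].

Fixpoint Pk (S : {set T}) (k : nat) : {set T} :=
  match k with
  | 0 => cnbhd S
  | k'.+1 => Pk S k' :|: nstar (Pk S k')
  end.

(* x belongs to P^infty(S) (the stable value = union of the increasing chain) *)
Definition observed (S : {set T}) (x : T) : Prop := exists k, x \in Pk S k.

Definition power_dominating (S : {set T}) : Prop := forall x, observed S x.
End PowerDomination.

(* T^+_{m,2}: vertices are the stem r', the root r, the children c_i (i < m)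
   and the grandchildren g_(i,j) (child j of c_i). *)
Definition Tp2 (m : nat) : finType := (unit + unit + 'I_m + ('I_m * 'I_m))%type.

Definition tstem {m} : Tp2 m := inl (inl (inl tt)).
Definition troot {m} : Tp2 m := inl (inl (inr tt)).
Definition child {m} (i : 'I_m) : Tp2 m := inl (inr i).
Definition gchild {m} (i j : 'I_m) : Tp2 m := inr (i, j).

(* parent relation: parent u v means u is the parent of v (stem r' is attached to r) *)
Definition parent_rel m (u v : Tp2 m) : bool :=
  match u, v with
  | inl (inl (inr tt)), inl (inl (inl tt)) => true   (* r -- r' *)
  | inl (inl (inr tt)), inl (inr _) => true          (* r -- c_i *)
  | inl (inr i), inr (i', _) => i == i'              (* c_i -- g_(i,j) *)
  | _, _ => false
  end.

Definition Tp2_adj m : rel (Tp2 m) := fun u v => parent_rel u v || parent_rel v u.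

Definition TypeII m (S : {set Tp2 m}) : Prop :=
  tstem \notin S /\ ~ power_dominating (@Tp2_adj m) S
  /\ power_dominating (@Tp2_adj m) (tstem |: S).

From mathcomp Require Import all_boot.
Set Implicit Arguments. Unset Strict Implicit. Unset Printing Implicit Defensive.

(* Let C be the set observed from S.  Every child c_i of the root lies in C: otherwise
   the vertices other than the grandchildren of unobserved children form a set that
   contains N[S + r'] and is closed under forcing (a grandchild could only be forced by
   its parent, which has at least two such grandchildren since m >= 2), so S + r' would
   not be power dominating.  If the root were in C, it would force r', and then C would
   contain N[S + r'] and be closed, making S itself power dominating.  Hence r is not
   observed, and neither is r', which would force r. *)

Section Forcing.
Variables (T : finType) (e : rel T).

Lemma nstarP (A : {set T}) x :
  reflect (exists2 a, a \in A &
             [/\ e a x, x \notin A & forall y, e a y -> y \notin A -> y = x])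
          (x \in nstar e A).
Proof.
apply: (iffP idP).
- rewrite inE => /existsP [a /andP [aA /eqP Ea]]; exists a => //.
  have : x \in [set y | e a y && (y \notin A)] by rewrite Ea set11.
  rewrite inE => /andP [eax xA]; split=> // y eay yA.
  by apply/set1P; rewrite -Ea inE eay.
- case=> a aA [eax xA uniq_x]; rewrite inE; apply/existsP; exists a.
  rewrite aA; apply/eqP/setP => y; rewrite !inE.
  by apply/andP/eqP => [[eay yA] | ->]; [exact: uniq_x | ].
Qed.

Lemma nstar_sub (A B : {set T}) x :
  A \subset B -> x \in nstar e A -> x \notin B -> x \in nstar e B.
Proof.
move=> sAB /nstarP [a aA [eax _ uniq_x]] xB; apply/nstarP; exists a.
  exact: (subsetP sAB).
split=> // y eay yB; apply: uniq_x => //.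
by apply: contra yB; apply: (subsetP sAB).
Qed.

Lemma closed_forced (C : {set T}) a x :
  nstar e C \subset C -> a \in C -> e a x ->
  (forall y, e a y -> y != x -> y \in C) -> x \in C.
Proof.
move=> closedC aC eax others; rewrite -(setUidPl closedC) inE.
case xC: (x \in C) => //=; apply/nstarP; exists a => //; rewrite xC.
split=> // y eay yC; apply/eqP; apply: contraR yC; exact: others.
Qed.

Lemma cnbhd_sub_Pk S k : cnbhd e S \subset Pk e S k.
Proof. by elim: k => //= k IH; apply: subset_trans IH (subsetUl _ _). Qed.

Lemma Pk_sub_closed S (U : {set T}) :
  cnbhd e S \subset U -> nstar e U \subset U -> forall k, Pk e S k \subset U.
Proof.
move=> sSU closedU; elim=> //= k IH; rewrite subUset IH.
apply/subsetP => x xF; rewrite -(setUidPl closedU) inE.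
by case xU: (x \in U) => //=; rewrite (nstar_sub IH xF) ?xU.
Qed.

Lemma Pk_stable_or_card S k : Pk e S k = Pk e S k.+1 \/ k < #|Pk e S k.+1|.
Proof.
have grow j : Pk e S j != Pk e S j.+1 -> #|Pk e S j| < #|Pk e S j.+1|.
  by move=> ne; apply: proper_card; rewrite properEneq ne subsetUl.
elim: k => [|k [E | lt]].
- case: (Pk e S 0 =P Pk e S 1) => [E | /eqP /grow lt]; [by left | right].
  exact: leq_ltn_trans (leq0n _) lt.
- by left; congr (_ :|: nstar e _).
- case: (Pk e S k.+1 =P Pk e S k.+2) => [E | /eqP /grow lt']; [by left | right].
  exact: leq_ltn_trans lt lt'.
Qed.

Lemma nstar_Pk_card_sub S : nstar e (Pk e S #|T|) \subset Pk e S #|T|.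
Proof.
case: (Pk_stable_or_card S #|T|) => [E | lt]; first by rewrite {2}E subsetUr.
by have := max_card (mem (Pk e S #|T|.+1)); rewrite leqNgt lt.
Qed.

Lemma observedE S x : observed e S x <-> x \in Pk e S #|T|.
Proof.
split=> [[k xk] | ]; last by exists #|T|.
exact: (subsetP (Pk_sub_closed (cnbhd_sub_Pk S _) (nstar_Pk_card_sub S) k)).
Qed.

Lemma power_dominating_sub S (U : {set T}) :
  power_dominating e S -> cnbhd e S \subset U -> nstar e U \subset U ->
  forall x, x \in U.
Proof.
by move=> domS sSU closedU x; have [k] := domS x; apply/subsetP/Pk_sub_closed.
Qed.

Lemma cnbhd_setU1_sub a S (U : {set T}) :
  a \in U -> (forall x, e a x -> x \in U) -> cnbhd e S \subset U ->
  cnbhd e (a |: S) \subset U.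
Proof.
move=> aU nbhd_a sSU; apply/subsetP => x.
rewrite inE => /orP [/setU1P [-> // | xS] | /existsP [y /andP [/setU1P [-> | yS] eyx]]].
- by apply: (subsetP sSU); rewrite inE xS.
- exact: nbhd_a.
- by apply: (subsetP sSU); rewrite inE; apply/orP; right; apply/existsP; exists y; rewrite yS.
Qed.

Lemma cnbhd_set1 a x : (x \in cnbhd e [set a]) = (x == a) || e a x.
Proof.
rewrite !inE; congr (_ || _); apply/existsP/idP => [[y /andP [/set1P -> //]] | eax].
by exists a; rewrite set11.
Qed.

End Forcing.

Section Tree.
Variable m : nat.
Local Notation e := (@Tp2_adj m).

Lemma Tp2_adjC : symmetric e.
Proof. by move=> x y; rewrite /Tp2_adj orbC. Qed.

Lemma Tp2_adj_stem x : e tstem x = (x == troot).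
Proof. by case: x => [[[[]|[]]|i]|[i j]]. Qed.

Lemma Tp2_adj_gchild i j x : e (gchild i j) x = (x == child i).
Proof. by case: x => [[[[]|[]]|i']|[i' j']]; rewrite /Tp2_adj //= orbF. Qed.

Lemma Tp2_adj_child_gchild i j : e (child i) (gchild i j).
Proof. by rewrite /Tp2_adj /= eqxx. Qed.

Lemma Tp2_adj_root x : e troot x -> x = tstem \/ exists i, x = child i.
Proof. by case: x => [[[[]|[]]|i]|[i j]] // _; [left | right; exists i]. Qed.

Lemma leaf_forces_parent (C : {set Tp2 m}) i j :
  nstar e C \subset C -> gchild i j \in C -> child i \in C.
Proof.
move=> closedC gC; apply: (closed_forced closedC gC); first by rewrite Tp2_adj_gchild.
by move=> y; rewrite Tp2_adj_gchild => ->.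
Qed.

Definition prune (C : {set Tp2 m}) : {set Tp2 m} :=
  [set x | if x is inr (i, _) then child i \in C else true].

Lemma cnbhd_stem_sub_prune S (C : {set Tp2 m}) :
  cnbhd e S \subset C -> nstar e C \subset C -> cnbhd e (tstem |: S) \subset prune C.
Proof.
move=> sSC closedC; apply: cnbhd_setU1_sub; first by rewrite inE.
  by move=> x; rewrite Tp2_adj_stem => /eqP ->; rewrite inE.
apply/subsetP => x xS; rewrite inE; case: x xS => [// | [i j] xS] /=.
exact: (leaf_forces_parent closedC (subsetP sSC _ xS)).
Qed.

Lemma exists_other_ord (j : 'I_m) : 1 < m -> exists j' : 'I_m, j' != j.
Proof.
move=> m_gt1; have : 0 < #|[set~ j]| by rewrite cardsC1 card_ord -ltnS prednK ?(ltnW m_gt1).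
by case/card_gt0P => j'; rewrite !inE; exists j'.
Qed.

(* An unpruned leaf [g_(i,j)] could only be forced by [c_i], which has a second
   unpruned leaf as neighbour. *)
Lemma nstar_prune_sub (C : {set Tp2 m}) : 1 < m -> nstar e (prune C) \subset prune C.
Proof.
move=> m_gt1; apply/subsetP => x /nstarP [a _ [eax xC uniq_x]].
case: x eax xC uniq_x => [x | [i j]]; first by rewrite inE.
rewrite inE /= => eax ciC uniq_x.
have a_ci : a = child i by apply/eqP; rewrite -(Tp2_adj_gchild i j) Tp2_adjC.
subst a.
have [j' ne_j'j] := exists_other_ord j m_gt1.
have := uniq_x (gchild i j') (Tp2_adj_child_gchild i j').
rewrite inE /= (negbTE ciC) => /(_ isT) [eq_j'].
by rewrite eq_j' eqxx in ne_j'j.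
Qed.

Section TypeIISet.
Variable S : {set Tp2 m}.
Local Notation C := (Pk e S #|Tp2 m|).

Lemma child_observed k : 1 < m -> power_dominating e (tstem |: S) -> child k \in C.
Proof.
move=> m_gt1 domSr; have closedC := nstar_Pk_card_sub e S.
have := power_dominating_sub domSr
  (cnbhd_stem_sub_prune (cnbhd_sub_Pk e S _) closedC) (nstar_prune_sub C m_gt1).
by move/(_ (gchild k k)); rewrite inE.
Qed.

Lemma root_unobserved : ~ power_dominating e S -> power_dominating e (tstem |: S) ->
  (forall i, child i \in C) -> troot \notin C.
Proof.
move=> notdomS domSr childC; apply/negP => rootC; apply: notdomS => x.
have closedC := nstar_Pk_card_sub e S.
have stemC : tstem \in C.
  apply: (closed_forced closedC rootC) => // y /Tp2_adj_root [-> | [i ->] _].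
    by rewrite eqxx.
  exact: childC.
apply/observedE; apply: power_dominating_sub domSr _ closedC x.
apply: cnbhd_setU1_sub (cnbhd_sub_Pk e S _) => // y.
by rewrite Tp2_adj_stem => /eqP ->.
Qed.

Lemma stem_unobserved : troot \notin C -> tstem \notin C.
Proof.
apply: contra => stemC; apply: (closed_forced (nstar_Pk_card_sub e S) stemC) => //.
by move=> y; rewrite Tp2_adj_stem => ->.
Qed.

End TypeIISet.

End Tree.

Theorem mainTheorem7 (m : nat) (S : {set Tp2 m}) :
  2 <= m -> TypeII S ->
  forall x : Tp2 m,
    (x \in cnbhd (@Tp2_adj m) [set troot] /\ ~ observed (@Tp2_adj m) S x)
    <-> (x = tstem \/ x = troot).
Proof.
move=> m_gt1 [_ [notdomS domSr]] x.
have childC i := child_observed i m_gt1 domSr.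
have rootC := root_unobserved notdomS domSr childC.
have stemC := stem_unobserved rootC.
rewrite cnbhd_set1; split=> [[/orP [/eqP -> | /Tp2_adj_root [-> | [i ->]]] unobs] | ].
- by right.
- by left.
- by case: unobs; apply/observedE.
- by case=> ->; split=> // /observedE; apply/negP.
Qed.
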